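(* Let $n\ge1$. The eigenvalues of $D^n$ are $1/2$ with multiplicity $2$ and $0$ with multiplicity $2^n-2$. The unit eigenvectors corresponding to the eigenvalue $1/2$ are $\psi_0^n$ and $\psi_1^n$, where $\psi_0^n\in\mathbb{C}^{2^n}$ has $j$-th coordinate ($j=0,\dots,2^n-1$) equal to $2^{-(n-1)/2}i^{c_n(j)}$ for $j$ even and $0$ for $j$ odd, and $\psi_1^n$ has $j$-th coordinate $0$ for $j$ even and $2^{-(n-1)/2}i^{c_n(j)}$ for $j$ odd.
   Context: For $n\ge1$, an $n$-path is a string $\alpha_0\alpha_1\cdots\alpha_n$ with $\alpha_k\in\{0,1\}$, $\alpha_0=0$; the $n$-paths are identified with $j\in\{0,\dots,2^n-1\}$, the path $\omega_j$ being the one whose string is the binary representation of $j$ (with $\alpha_n$ least significant). $D^n$ is the $2^n\times2^n$ matrix with $D^n_{jk}=D^n(\omega_j,\omega_k)$, where $D^n(\omega,\omega')=2^{-n}\prod_{k=1}^n i^{|\alpha_k-\alpha_{k-1}|}\prod_{k=1}^n i^{-|\alpha'_k-\alpha'_{k-1}|}\,\delta_{\alpha_n\alpha'_n}$ for $\omega=\alpha_0\cdots\alpha_n$, $\omega'=\alpha'_0\cdots\alpha'_n$ ($i=\sqrt{-1}$). $c_n(j)$ is the number of $k\in\{1,\dots,n\}$ with $\alpha_k\ne\alpha_{k-1}$ for the path $\omega_j$. *)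

From HB Require Import structures.
From mathcomp Require Import all_boot all_order all_algebra all_field.
Set Implicit Arguments. Unset Strict Implicit. Unset Printing Implicit Defensive.
Import Order.TTheory GRing.Theory Num.Theory.
Local Open Scope ring_scope.

(* alpha n j k = the k-th letter (k = 0..n) of the n-path omega_j, i.e. the
   binary digit of j of weight 2^(n-k); alpha_n is least significant and
   alpha_0 = 0 for j < 2^n. *)
Definition alpha (n j k : nat) : bool := odd (j %/ 2 ^ (n - k)).

Definition cn (n j : nat) : nat :=
  (\sum_(1 <= k < n.+1) (alpha n j k != alpha n j k.-1))%N.

Definition Dn (n : nat) : 'M[algC]_(2 ^ n) :=
  \matrix_(j, l)
    ((2 ^+ n)^-1
     * (\prod_(1 <= k < n.+1) 'i ^+ (alpha n j k != alpha n j k.-1))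
     * (\prod_(1 <= k < n.+1) 'i ^- (alpha n l k != alpha n l k.-1))
     * (alpha n j n == alpha n l n)%:R).

Definition psi (n : nat) (b : bool) : 'cV[algC]_(2 ^ n) :=
  \col_j (if odd j == b then (sqrtC 2 ^+ (n - 1))^-1 * 'i ^+ cn n j else 0).

Definition cdot (m : nat) (u v : 'cV[algC]_m) : algC :=
  \sum_(j < m) u j 0 * (v j 0)^*.

From HB Require Import structures.
From mathcomp Require Import all_boot all_order all_algebra all_field.
From mathcomp Require Import ring.
Import Order.TTheory GRing.Theory Num.Theory.
Local Open Scope ring_scope.

(* Since 2^-n = 1/2 (2^-((n-1)/2))^2 and the factor [alpha_n = alpha'_n] only
   compares parities, D^n = 1/2 (psi_0 psi_0^* + psi_1 psi_1^* ), where psi_0,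
   psi_1 are orthonormal (each has 2^(n-1) entries of modulus 2^-((n-1)/2)).
   Thus D^n = (1/2 P) P^* with P = (psi_0 psi_1) and P^* P = I_2, and Sylvester's
   identity X^2 chi(A B) = X^(2^n) chi(B A) gives the characteristic polynomial;
   moreover D^n v = v/2 forces v = <v, psi_0> psi_0 + <v, psi_1> psi_1. *)

Lemma det_scalar_sub_mulmxC {R : comNzRingType} {N m : nat} (x : R)
    (A : 'M[R]_(N, m)) (B : 'M[R]_(m, N)) :
  x ^+ m * \det (x%:M - A *m B) = x ^+ N * \det (x%:M - B *m A).
Proof.
set M := block_mx (x%:M) A B (1%:M : 'M_m).
have M_ufactor : M = block_mx 1%:M A 0 1%:M *m block_mx (x%:M - A *m B) 0 B 1%:M.
  by rewrite mulmx_block !mul1mx !mul0mx ?mulmx0 !mulmx1 ?addr0 ?add0r ?subrK.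
have M_lfactor : block_mx 1%:M 0 (- B) (x%:M) *m M
                 = block_mx (x%:M) A 0 (x%:M - B *m A).
  rewrite mulmx_block !mul1mx !mul0mx !mulmx1 ?addr0 ?add0r.
  by rewrite mulNmx mul_mx_scalar mul_scalar_mx addNr [_ + x%:M]addrC !mulNmx.
have := congr1 determinant M_lfactor.
rewrite det_mulmx det_lblock det_ublock !det_scalar M_ufactor det_mulmx.
by rewrite det_ublock det_lblock !det1 expr1n !mul1r !mulr1.
Qed.

Lemma char_poly_mulmxC (R : idomainType) (N m : nat)
    (A : 'M[R]_(N, m)) (B : 'M[R]_(m, N)) :
  (m <= N)%N -> char_poly (A *m B) = 'X ^+ (N - m) * char_poly (B *m A).
Proof.
move=> le_mN; rewrite /char_poly /char_poly_mx !map_mxM.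
have := det_scalar_sub_mulmxC 'X (map_mx polyC A) (map_mx polyC B).
have -> : ('X : {poly R}) ^+ N = 'X ^+ m * 'X ^+ (N - m) by rewrite -exprD subnKC.
rewrite -mulrA => /mulfI -> //.
by rewrite expf_neq0 // polyX_eq0.
Qed.

Lemma char_poly_scalar (R : comNzRingType) (m : nat) (a : R) :
  char_poly (a%:M : 'M_m) = ('X - a%:P) ^+ m.
Proof.
rewrite char_poly_trig ?scalar_mx_is_trig //.
under eq_bigr => i _ do rewrite mxE eqxx mulr1n.
by rewrite prodr_const card_ord.
Qed.

Lemma prod_iX_cn (n j : nat) :
  \prod_(1 <= k < n.+1) 'i ^+ (alpha n j k != alpha n j k.-1) = 'i ^+ cn n j :> algC.
Proof. by rewrite /cn (big_morph (fun k => 'i ^+ k) (exprD 'i) (expr0 'i)). Qed.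

Lemma invCiX (c : nat) : ('i ^+ c)^-1 = ('i ^+ c)^* :> algC.
Proof. by rewrite -exprVn invCi rmorphXn /= conjCi. Qed.

Lemma mulCiX_conj (c : nat) : 'i ^+ c * ('i ^+ c)^* = 1 :> algC.
Proof. by rewrite -normCK normrX normCi expr1n expr1n. Qed.

Definition psi_scale (n : nat) : algC := (sqrtC 2 ^+ (n - 1))^-1.

Lemma conjC_psi_scale n : (psi_scale n)^* = psi_scale n.
Proof. by rewrite geC0_conj // invr_ge0 exprn_ge0 // sqrtC_ge0 ler0n. Qed.

Lemma psi_scale_sqr n : psi_scale n * psi_scale n = (2 ^+ (n - 1))^-1.
Proof. by rewrite -invfM -expr2 -exprM mulnC exprM sqrtCK. Qed.

Lemma psiE n b j : psi n b j 0 = (odd j == b)%:R * psi_scale n * 'i ^+ cn n j.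
Proof. by rewrite mxE; case: (odd j == b); rewrite ?mul1r ?mul0r. Qed.

Lemma DnE n j l : Dn n j l =
  (2 ^+ n)^-1 * 'i ^+ cn n j * ('i ^+ cn n l)^* * (odd j == odd l)%:R.
Proof. by rewrite mxE prodfV !prod_iX_cn invCiX /alpha subnn expn0 !divn1. Qed.

Lemma sum_odd_eq_double (m : nat) (b : bool) :
  \sum_(j < m.*2) ((odd j == b)%:R : algC) = m%:R.
Proof.
elim: m => [|m IHm]; first by rewrite big_ord0.
rewrite doubleS !big_ord_recr /= IHm odd_double.
by case: b {IHm} => /=; rewrite -!natrD ?addn0 ?addn1.
Qed.

Section PsiBasis.

Variable n : nat.
Hypothesis n_gt0 : (0 < n)%N.

Lemma inv_exp2_psi_scale : (2 ^+ n)^-1 = 2^-1 * (psi_scale n * psi_scale n) :> algC.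
Proof. by case: n n_gt0 => // m _; rewrite psi_scale_sqr subn1 exprS invfM. Qed.

Lemma Dn_psi_outer j l : Dn n j l =
  2^-1 * (psi n false j 0 * (psi n false l 0)^* + psi n true j 0 * (psi n true l 0)^*).
Proof.
rewrite DnE !psiE !rmorphM /= conjC_psi_scale inv_exp2_psi_scale.
by case: (odd j); case: (odd l) => /=; rewrite ?rmorph0 ?rmorph1; ring.
Qed.

Lemma cdot_psi b b' : cdot (psi n b) (psi n b') = (b == b')%:R.
Proof.
rewrite /cdot.
transitivity (\sum_(j < 2 ^ n)
    (b == b')%:R * (psi_scale n * psi_scale n) * ((odd j == b)%:R : algC)).
  apply: eq_bigr => j _.
  rewrite !psiE !rmorphM /= conjC_psi_scale rmorph_nat.
  rewrite -[RHS]mulr1 -(mulCiX_conj (cn n j)).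
  by case: (odd j); case: b; case: b' => /=; ring.
rewrite -mulr_sumr -(prednK n_gt0) expnS mul2n sum_odd_eq_double.
rewrite psi_scale_sqr subn1 /= natrX mulfVK ?mulr1 //.
by rewrite expf_neq0 // pnatr_eq0.
Qed.

Lemma Dn_mulmx (v : 'cV[algC]_(2 ^ n)) : Dn n *m v =
  2^-1 *: (cdot v (psi n false) *: psi n false + cdot v (psi n true) *: psi n true).
Proof.
apply/matrixP => j k; rewrite (ord1 k) !mxE.
under eq_bigr => l _ do rewrite Dn_psi_outer mulrDr mulrDl.
rewrite big_split mulrDr /cdot !mulr_suml mulr_sumr mulr_sumr.
by congr (_ + _); apply: eq_bigr => l _; rewrite !mxE; ring.
Qed.

Lemma Dn_psi b : Dn n *m psi n b = 2^-1 *: psi n b.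
Proof.
rewrite Dn_mulmx !cdot_psi.
by case: b => /=; rewrite ?scale0r ?scale1r ?addr0 ?add0r.
Qed.

Lemma Dn_eigenvectorP (v : 'cV[algC]_(2 ^ n)) :
  Dn n *m v = 2^-1 *: v <->
  exists a0 a1 : algC, v = a0 *: psi n false + a1 *: psi n true.
Proof.
split=> [|[a0 [a1 ->]]].
  rewrite Dn_mulmx => /(congr1 (fun w => 2 *: w)).
  rewrite /= !scalerA mulfV ?pnatr_eq0 // !scale1r => v_expand.
  exists (cdot v (psi n false)), (cdot v (psi n true)).
  exact: esym v_expand.
rewrite mulmxDr -!scalemxAr !Dn_psi scalerDr !scalerA.
by rewrite [a0 * _]mulrC [a1 * _]mulrC.
Qed.

Definition psi_mx : 'M[algC]_(2 ^ n, 2) := \matrix_(j, b) psi n (odd b) j 0.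
Definition psi_adj : 'M[algC]_(2, 2 ^ n) := \matrix_(b, l) (psi n (odd b) l 0)^*.

Lemma Dn_factor : Dn n = 2^-1 *: psi_mx *m psi_adj.
Proof.
apply/matrixP => j l.
by rewrite Dn_psi_outer !mxE big_ord_recl big_ord1 !mxE /=; ring.
Qed.

Lemma psi_gram : psi_adj *m psi_mx = 1%:M.
Proof.
apply/matrixP => b b'; rewrite !mxE.
transitivity (cdot (psi n (odd b')) (psi n (odd b))).
  by rewrite /cdot; apply: eq_bigr => l _; rewrite !mxE mulrC.
rewrite cdot_psi.
by case: b => [[|[|//]] ?]; case: b' => [[|[|//]] ?].
Qed.

Lemma char_poly_Dn :
  char_poly (Dn n) = ('X - (2^-1 : algC)%:P) ^+ 2 * 'X ^+ (2 ^ n - 2).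
Proof.
have le_2_exp2n : (2 <= 2 ^ n)%N.
  by rewrite -(prednK n_gt0) expnS leq_pmulr // expn_gt0.
rewrite Dn_factor char_poly_mulmxC // -scalemxAr psi_gram scalemx1.
by rewrite char_poly_scalar mulrC.
Qed.

End PsiBasis.

Theorem theorem5p6 (n : nat) (hn : (1 <= n)%N) :
  char_poly (Dn n) = ('X - (2%:R^-1 : algC)%:P) ^+ 2 * 'X ^+ (2 ^ n - 2)
  /\ (forall b : bool, Dn n *m psi n b = 2%:R^-1 *: psi n b)
  /\ (forall b : bool, cdot (psi n b) (psi n b) = 1)
  /\ cdot (psi n false) (psi n true) = 0
  /\ (forall v : 'cV[algC]_(2 ^ n),
        Dn n *m v = 2%:R^-1 *: v <->
        exists a0 a1 : algC, v = a0 *: psi n false + a1 *: psi n true).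
Proof.
split; first exact: char_poly_Dn.
split; first exact: Dn_psi.
split; first by move=> b; rewrite cdot_psi // eqxx.
split; first by rewrite cdot_psi.
exact: Dn_eigenvectorP.
Qed.
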